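(* Let $C$ be a linear completely regular $[n,k,2]_q$ code with covering radius $\rho=1$ and $k<n-1$, let $n_a$ be the number of codewords at distance one from any vector not in $C$, and let $X_1,\dots,X_{n/n_a}$ be a partition of $\{1,\dots,n\}$ into sets of size $n_a$ such that every weight-2 codeword of $C$ has support contained in one of the $X_i$. For each $i$, let $D_i$ be the code obtained by taking the codewords of $C$ whose supports are contained in $X_i$ and deleting the coordinate positions outside $X_i$. Then $D_i$ is a linear completely regular code of length $n_a$, dimension $n_a-1$, minimum distance $2$ and covering radius $1$, and (for a suitable ordering of the coordinates in $X_i$) it has a generator matrix $G_i=[I\,|\,{\bf h}]$ where $I$ is the $(n_a-1)\times(n_a-1)$ identity matrix and ${\bf h}$ is a column vector of weight $n_a-1$.
   Context: Hamming distance; support of a vector = set of its nonzero coordinates; covering radius $\rho=\max_{\bf v}\min_{{\bf x}\in C}d({\bf v},{\bf x})$. $C$ is completely regular if for every vector ${\bf x}$, with $t=d({\bf x},C)$, the number of codewords at distance $i$ from ${\bf x}$ depends only on $t$ and $i$. *)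

From HB Require Import structures.
From mathcomp Require Import all_boot all_order all_algebra all_fingroup.
Set Implicit Arguments. Unset Strict Implicit. Unset Printing Implicit Defensive.
Import GRing.Theory.
Local Open Scope ring_scope.

Section Codes.
Variable F : finFieldType.

Definition supp m (x : 'rV[F]_m) : {set 'I_m} := [set i | x 0 i != 0].
Definition wt m (x : 'rV[F]_m) : nat := #|supp x|.
Definition hdist m (x y : 'rV[F]_m) : nat := wt (x - y).

Definition linear_code m (C : {set 'rV[F]_m}) : Prop :=
  0 \in C /\ forall (a : F) (x y : 'rV[F]_m), x \in C -> y \in C -> a *: x + y \in C.

Definition code_dim m (C : {set 'rV[F]_m}) : nat := \dim <<enum C>>%VS.

Definition min_distance m (C : {set 'rV[F]_m}) (d : nat) : Prop :=
  (exists x y, [/\ x \in C, y \in C, x != y & hdist x y = d]) /\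
  (forall x y, x \in C -> y \in C -> x != y -> (d <= hdist x y)%N).

Definition dist_to m (C : {set 'rV[F]_m}) (v : 'rV[F]_m) : nat :=
  \big[minn/m]_(c in C) hdist v c.

Definition covering_radius m (C : {set 'rV[F]_m}) : nat :=
  \max_(v : 'rV[F]_m) dist_to C v.

Definition nb_at m (C : {set 'rV[F]_m}) (v : 'rV[F]_m) (i : nat) : nat :=
  #|[set c in C | hdist v c == i]|.

Definition completely_regular m (C : {set 'rV[F]_m}) : Prop :=
  forall v w : 'rV[F]_m, dist_to C v = dist_to C w ->
    forall i, nb_at C v i = nb_at C w i.

Definition generator_matrix m k (C : {set 'rV[F]_m}) (G : 'M[F]_(k, m)) : Prop :=
  \rank G = k /\ C = [set u *m G | u : 'rV[F]_k].

Definition restr n (X : {set 'I_n}) (c : 'rV[F]_n) : 'rV[F]_#|X| :=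
  \row_(j < #|X|) c 0 (enum_val j).

Definition sub_code n (C : {set 'rV[F]_n}) (X : {set 'I_n}) : {set 'rV[F]_#|X|} :=
  [set restr X c | c in C & supp c \subset X].

(* the matrix [I | h] with coordinates reordered by the permutation s *)
Definition Ih_perm m (s : 'S_m) (h : 'cV[F]_m.-1) : 'M[F]_(m.-1, m) :=
  \matrix_(i < m.-1, j < m)
     (if (s j < m.-1)%N then ((i : nat) == s j)%:R else h i 0).

End Codes.

(* Only the weight-two words of C matter. Fix i in a block X. Each of the n_a
   codewords at distance one from the unit vector e_i differs from it in exactly one
   coordinate; two of them cannot share that coordinate (their difference would have
   weight one), and the coordinate lies in X because a word of weight two lies inside
   a single block. As |X| = n_a, every pair {i, j} of X is the support of a codeword,
   so D_X is a linear code without words of weight one in which every pair of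
   coordinates supports a word. Normalizing the words supported on {j, last} gives a
   generator matrix [I | h] with h of full weight, and D_X is the kernel of one
   syndrome functional with nonzero coefficients. This yields covering radius one,
   and complete regularity: for v, w equally far from D_X, an affine map
   c |-> w - l (v - c) sends the codewords at distance i from v to those at distance i
   from w. *)

From mathcomp Require Import all_boot all_order all_algebra all_fingroup ring.
Set Warnings "-notation-overridden,-ambiguous-paths".
Set Implicit Arguments.
Unset Strict Implicit.
Unset Printing Implicit Defensive.
Import Order.TTheory GRing.Theory.
Local Open Scope ring_scope.

Section Weights.
Variable F : finFieldType.

Lemma suppE m (x : 'rV[F]_m) j : (j \in supp x) = (x 0 j != 0).
Proof. by rewrite inE. Qed.

Lemma wt_eq0 m (x : 'rV[F]_m) : (wt x == 0%N) = (x == 0).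
Proof.
apply/idP/eqP => [|->]; last by rewrite cards_eq0; apply/eqP/setP => j; rewrite !inE mxE eqxx.
rewrite cards_eq0 => /eqP x0; apply/rowP => j; rewrite mxE.
by apply/eqP; rewrite -[_ == 0]negbK -suppE x0 inE.
Qed.

Lemma suppZ m (a : F) (x : 'rV[F]_m) : a != 0 -> supp (a *: x) = supp x.
Proof. by move=> a0; apply/setP => j; rewrite !suppE mxE mulf_eq0 negb_or a0. Qed.

Lemma supp_sub_set1_wt m (x : 'rV[F]_m) j : supp x \subset [set j] -> (wt x <= 1)%N.
Proof. by move/subset_leq_card; rewrite cards1. Qed.

Lemma supp_delta_sub m (i k : 'I_m) (c : 'rV[F]_m) :
  i != k -> supp ('e_i - c) = [set k] -> supp c = [set i; k].
Proof.
move=> ik supp_k; apply/setP => l; rewrite suppE !inE.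
have /setP/(_ l) := supp_k; rewrite suppE !mxE !inE eqxx /=.
have [->|li] := eqVneq l i; last by rewrite sub0r oppr_eq0 => ->.
by rewrite (negbTE ik) subr_eq0 eq_sym => /negbFE/eqP->; rewrite oner_eq0.
Qed.

Lemma supp_delta m (j : 'I_m) : supp ('e_j : 'rV[F]_m) = [set j].
Proof.
by apply/setP => k; rewrite suppE !mxE !inE eqxx /=; case: (k == j); rewrite ?oner_eq0 ?eqxx.
Qed.

Lemma supp_subB m (x y : 'rV[F]_m) : supp (x - y) \subset supp x :|: supp y.
Proof.
apply/subsetP => j; rewrite in_setU !suppE !mxE; apply: contraR.
by rewrite negb_or !negbK => /andP[/eqP-> /eqP->]; rewrite subrr.
Qed.

End Weights.

Section LinearCodes.
Variables (F : finFieldType) (m : nat) (D : {set 'rV[F]_m}).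
Hypothesis linD : linear_code D.

Lemma linear_code0 : 0 \in D.
Proof. by case: linD. Qed.

Lemma linear_codeZ a x : x \in D -> a *: x \in D.
Proof. by case: linD => D0 linD' xD; rewrite -[_ *: _]addr0; apply: linD'. Qed.

Lemma linear_codeD x y : x \in D -> y \in D -> x + y \in D.
Proof. by case: linD => _ linD' xD yD; rewrite -[x]scale1r; apply: linD'. Qed.

Lemma linear_codeB x y : x \in D -> y \in D -> x - y \in D.
Proof. by move=> xD yD; rewrite addrC -scaleN1r; case: linD => _; apply. Qed.

Lemma linear_code_mulmx k (G : 'M[F]_(k, m)) u :
  (forall i, row i G \in D) -> u *m G \in D.
Proof.
move=> GD; rewrite mulmx_sum_row; apply: (big_ind [in D]) => //.
- exact: linear_code0.
- exact: linear_codeD.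
by move=> i _; apply: linear_codeZ.
Qed.

Lemma min_distance2 : {in D, forall y, wt y != 1%N} ->
  (exists2 y, y \in D & wt y = 2%N) -> min_distance D 2.
Proof.
move=> no_wt1 [y yD wt_y]; split.
  exists y, 0; rewrite /hdist subr0 -wt_eq0 wt_y; split=> //.
  exact: linear_code0.
move=> x z xD zD xz; have xzD := linear_codeB xD zD.
rewrite /hdist ltnNge; apply/negP; rewrite leq_eqVlt ltnS leqn0 wt_eq0 subr_eq0.
by rewrite (negbTE xz) orbF; apply/negP; apply: no_wt1.
Qed.

Lemma min_distance_exists_wt d : min_distance D d -> exists2 c, c \in D & wt c = d.
Proof. by case=> [[x [y [xD yD _ dxy]]] _]; exists (x - y) => //; apply: linear_codeB. Qed.

Lemma min_distance2_no_wt1 : min_distance D 2 -> {in D, forall c, wt c != 1%N}.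
Proof.
case=> _ md c cD; apply/eqP => wt1; have := md c 0 cD linear_code0.
by rewrite -wt_eq0 /hdist subr0 wt1 => /(_ isT).
Qed.

Lemma nb_at_le (v w : 'rV[F]_m) (l : F) i :
  l != 0 -> w - l *: v \in D -> (nb_at D v i <= nb_at D w i)%N.
Proof.
move=> l0 wvD; pose g c := w - l *: (v - c).
have g_inj : injective g.
  by move=> c c' /addrI/oppr_inj/(scalerI l0)/addrI/oppr_inj.
rewrite /nb_at -(card_imset _ g_inj); apply/subset_leq_card/subsetP => _ /imsetP[c + ->].
rewrite !inE => /andP[cD dist_i]; apply/andP; split.
  rewrite /g scalerBr opprD opprK addrA.
  by apply: linear_codeD => //; apply: linear_codeZ.
by rewrite /hdist /g subKr /wt suppZ.
Qed.

End LinearCodes.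

Section NoWeightOne.
Variables (F : finFieldType) (m : nat) (D : {set 'rV[F]_m}).
Hypothesis no_wt1 : {in D, forall y, wt y != 1%N}.

Lemma supp_sub_set1_eq0 y j : y \in D -> supp y \subset [set j] -> y = 0.
Proof.
move=> yD /supp_sub_set1_wt; rewrite leq_eqVlt ltnS leqn0 (negbTE (no_wt1 yD)).
by rewrite wt_eq0 => /eqP.
Qed.

Lemma delta_notin j : 'e_j \notin D.
Proof. by apply: contraL (@no_wt1 'e_j) _; rewrite /wt supp_delta cards1. Qed.

End NoWeightOne.

Section Distances.
Variables (F : finFieldType) (m : nat) (D : {set 'rV[F]_m}).

Lemma dist_to_le v c : c \in D -> (dist_to D v <= hdist v c)%N.
Proof. by move=> cD; rewrite /dist_to -minEnat -leEnat; exact: bigmin_le_cond. Qed.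

Lemma dist_to_eq0 v : (0 < m)%N -> (dist_to D v == 0%N) = (v \in D).
Proof.
move=> m_gt0; apply/idP/idP => [|vD]; last first.
  by rewrite -leqn0 (leq_trans (dist_to_le v vD)) // /hdist subrr leqn0 wt_eq0.
apply: contraLR => vD; rewrite -lt0n /dist_to.
apply: (big_ind (fun x => 0 < x)%N) => // [a b|c cD]; first by rewrite leq_min => ->.
by rewrite lt0n wt_eq0 subr_eq0; apply: contraNneq vD => ->.
Qed.

End Distances.

Lemma code_dim_row_free (F : finFieldType) k m (G : 'M[F]_(k, m)) :
  row_free G -> code_dim [set u *m G | u : 'rV_k] = k.
Proof.
move=> freeG; rewrite /code_dim; pose f : 'Hom('rV[F]_k, 'rV[F]_m) := linfun (mulmxr G).
have -> : <<enum [set u *m G | u : 'rV_k]>>%VS = limg f.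
  apply/eqP; rewrite eqEsubv; apply/andP; split.
    by apply/span_subvP => x; rewrite mem_enum => /imsetP[u _ ->];
      apply/memv_imgP; exists u; rewrite ?memvf ?lfunE.
  apply/subvP => _ /memv_imgP[u _ ->]; rewrite lfunE /=; apply: memv_span.
  by rewrite mem_enum; apply/imsetP; exists u.
have /eqP f_inj : lker f == 0%VS.
  by apply/lker0P => u u'; rewrite !lfunE; apply: row_free_inj.
have := limg_ker_dim f fullv; rewrite f_inj capv0 dimv0 add0n dimvf.
by rewrite dim_matrix mul1r.
Qed.

Definition pair_supported (F : finFieldType) m (D : {set 'rV[F]_m}) : Prop :=
  forall j j' : 'I_m, j != j' -> exists2 y, y \in D & supp y = [set j; j'].

Lemma lift_neq_max n (i : 'I_n) : lift ord_max i != ord_max.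
Proof. by rewrite eq_sym neq_lift. Qed.

Section PairSupportedCode.
Variables (F : finFieldType) (p : nat) (D : {set 'rV[F]_p.+2}).
Hypotheses (linD : linear_code D) (no_wt1 : {in D, forall y, wt y != 1%N}).
Implicit Types (x y : 'rV[F]_p.+2) (u : 'rV[F]_p.+1) (l : F).

Lemma exists_normalized_rows : pair_supported D ->
  exists G : 'M[F]_(p.+1, p.+2), [/\ forall i, row i G \in D,
    forall i, G i (lift ord_max i) = 1 &
    forall i, supp (row i G) = [set lift ord_max i; ord_max]].
Proof.
move=> pairD.
have /fin_all_exists[y yP] : forall i, exists y : 'rV_p.+2, [/\ y \in D,
    y 0 (lift ord_max i) = 1 & supp y = [set lift ord_max i; ord_max]].
  move=> i.
  have [y yD supp_y] := pairD (lift ord_max i) ord_max (lift_neq_max i).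
  have y_i : y 0 (lift ord_max i) != 0 by rewrite -suppE supp_y !inE eqxx.
  exists ((y 0 (lift ord_max i))^-1 *: y).
  by rewrite mxE mulVf // suppZ ?invr_eq0 //; split=> //; apply: linear_codeZ.
by exists (\matrix_i y i); split=> i; rewrite ?rowK ?mxE; case: (yP i).
Qed.

Section NormalizedRows.
Variable G : 'M[F]_(p.+1, p.+2).
Hypotheses (G_rows : forall i, row i G \in D)
  (G_diag : forall i, G i (lift ord_max i) = 1)
  (G_supp : forall i, supp (row i G) = [set lift ord_max i; ord_max]).

Lemma G_last i : G i ord_max != 0.
Proof. by have := G_supp i => /setP/(_ ord_max); rewrite suppE mxE !inE eqxx orbT. Qed.

Lemma G_off i (j : 'I_p.+2) : j != lift ord_max i -> j != ord_max -> G i j = 0.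
Proof.
move=> ji jm; have /setP/(_ j) := G_supp i; rewrite suppE mxE !inE (negbTE ji) (negbTE jm).
by move/negbFE/eqP.
Qed.

Lemma mulG_lift u k : (u *m G) 0 (lift ord_max k) = u 0 k.
Proof.
rewrite mxE (bigD1 k) //= G_diag mulr1 big1 ?addr0 // => i ik.
by rewrite G_off ?mulr0 ?lift_neq_max // (inj_eq lift_inj) eq_sym.
Qed.

Lemma row_free_G : row_free G.
Proof. by apply: inj_row_free => u uG0; apply/rowP => k; rewrite -mulG_lift uG0 !mxE. Qed.

Definition proj x := \row_i x 0 (lift ord_max i) *m G.

Lemma proj_mem x : proj x \in D.
Proof. exact: linear_code_mulmx. Qed.

Lemma projB x y l : proj (x - l *: y) = proj x - l *: proj y.
Proof.
rewrite /proj scalemxAl -mulmxBl; congr (_ *m _).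
by apply/rowP => i; rewrite !mxE.
Qed.

Lemma supp_sub_proj x : supp (x - proj x) \subset [set ord_max].
Proof.
apply/subsetP => j; rewrite suppE in_set1; case: (unliftP ord_max j) => [k ->|-> //].
by rewrite 2!mxE /proj mulG_lift mxE subrr eqxx.
Qed.

Lemma proj_id x : x \in D -> proj x = x.
Proof.
move=> xD; apply/esym/eqP; rewrite -subr_eq0; apply/eqP.
exact: (supp_sub_set1_eq0 no_wt1 (linear_codeB linD xD (proj_mem x)) (supp_sub_proj x)).
Qed.

Lemma code_eq_img : D = [set u *m G | u : 'rV_p.+1].
Proof.
apply/setP => x; apply/idP/imsetP => [xD|[u _ ->]]; last exact: linear_code_mulmx.
by exists (\row_i x 0 (lift ord_max i)) => //; rewrite -/(proj x) proj_id.
Qed.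

Definition syndrome x := (x - proj x) 0 ord_max.

Lemma sub_proj_delta x : x - proj x = syndrome x *: 'e_ord_max.
Proof.
apply/rowP => j; rewrite [RHS]mxE [X in _ * X]mxE eqxx /=.
have [-> | jm] := eqVneq j ord_max; first by rewrite mulr1.
rewrite mulr0; apply/eqP; rewrite -[_ == 0]negbK -suppE.
by apply: contra jm => /(subsetP (supp_sub_proj x)); rewrite in_set1.
Qed.

Lemma syndrome_eq0 x : (syndrome x == 0) = (x \in D).
Proof.
apply/idP/idP => [/eqP d0|xD]; last by rewrite /syndrome proj_id // subrr mxE.
by rewrite -[x](subrK (proj x)) sub_proj_delta d0 scale0r add0r proj_mem.
Qed.

Lemma syndromeB x y l : syndrome (x - l *: y) = syndrome x - l * syndrome y.
Proof. by rewrite /syndrome projB !mxE; ring. Qed.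

Lemma completely_regular_pair_supported : completely_regular D.
Proof.
move=> v w dvw i.
suff le_nb a b : (a \in D) = (b \in D) -> (nb_at D a i <= nb_at D b i)%N.
  have Dvw : (v \in D) = (w \in D) by rewrite -!dist_to_eq0 ?dvw.
  by apply/eqP; rewrite eqn_leq !le_nb.
rewrite -!syndrome_eq0 => Dab; have [a0|a0] := eqVneq (syndrome a) 0.
  apply: (nb_at_le linD i (oner_neq0 F)).
  by rewrite -syndrome_eq0 syndromeB a0 mulr0 subr0 -Dab a0.
have b0 : syndrome b != 0 by rewrite -Dab.
apply: (nb_at_le linD i (_ : syndrome b / syndrome a != 0)); first by rewrite mulf_neq0 ?invr_eq0.
by rewrite -syndrome_eq0 syndromeB divfK ?subrr.
Qed.

Lemma covering_radius_pair_supported : covering_radius D = 1%N.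
Proof.
apply/eqP; rewrite eqn_leq; apply/andP; split.
  apply/bigmax_leqP => v _; apply: leq_trans (dist_to_le v (proj_mem v)) _.
  exact: supp_sub_set1_wt (supp_sub_proj v).
by apply: leq_trans (leq_bigmax 'e_ord_max); rewrite lt0n dist_to_eq0 ?(delta_notin no_wt1).
Qed.

Lemma Ih_perm1_col_max : Ih_perm (1 : 'S_p.+2) (col ord_max G) = G.
Proof.
apply/matrixP => i j; rewrite mxE perm1; case: (unliftP ord_max j) => [k ->|->].
  rewrite lift_max ltn_ord; have [<-|ik] := eqVneq i k; first by rewrite eqxx G_diag.
  have ik' : (i == k :> nat) = false by apply: negbTE.
  by rewrite ik' G_off ?lift_neq_max // (inj_eq lift_inj) eq_sym.
by rewrite ltnn mxE.
Qed.

End NormalizedRows.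

Lemma pair_supported_codeSS : pair_supported D ->
  [/\ code_dim D = p.+1, min_distance D 2, covering_radius D = 1%N,
      completely_regular D &
      exists (s : 'S_p.+2) (h : 'cV[F]_p.+1),
        #|[set i | h i 0 != 0]| = p.+1 /\ generator_matrix D (Ih_perm s h)].
Proof.
move=> /exists_normalized_rows[G [G_rows G_diag G_supp]].
have D_img := code_eq_img G_rows G_diag G_supp.
split.
- by rewrite D_img code_dim_row_free // row_free_G.
- apply: min_distance2 => //; exists (row 0 G) => //.
  by rewrite /wt G_supp cards2 lift_neq_max.
- exact: covering_radius_pair_supported G_rows G_diag G_supp.
- exact: completely_regular_pair_supported G_rows G_diag G_supp.
exists 1%g, (col ord_max G); split.
  by rewrite -[RHS]card_ord; apply: eq_card => i; rewrite !inE mxE G_last.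
by rewrite Ih_perm1_col_max //; split; [apply/eqP; exact: row_free_G | exact: D_img].
Qed.

End PairSupportedCode.

Theorem pair_supported_code (F : finFieldType) m (D : {set 'rV[F]_m}) :
  (1 < m)%N -> linear_code D -> {in D, forall y, wt y != 1%N} -> pair_supported D ->
  [/\ code_dim D = m.-1, min_distance D 2, covering_radius D = 1%N,
      completely_regular D &
      exists (s : 'S_m) (h : 'cV[F]_m.-1),
        #|[set i | h i 0 != 0]| = m.-1 /\ generator_matrix D (Ih_perm s h)].
Proof. by case: m D => [|[|p]] // D _; apply: pair_supported_codeSS. Qed.

Section SubCode.
Variables (F : finFieldType) (n : nat) (C : {set 'rV[F]_n}) (X : {set 'I_n}).
Implicit Type c : 'rV[F]_n.

Lemma sub_codeP y :
  reflect (exists c, [/\ c \in C, supp c \subset X & y = restr X c]) (y \in sub_code C X).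
Proof.
apply: (iffP imsetP) => [[c + ->]|[c [cC sX ->]]]; first by rewrite inE => /andP[]; exists c.
by exists c; rewrite // inE cC.
Qed.

Lemma supp_restr c : supp c \subset X -> [set enum_val j | j in supp (restr X c)] = supp c.
Proof.
move=> sX; apply/setP => k; apply/imsetP/idP => [[j + ->]|kc]; first by rewrite !suppE mxE.
have kX := subsetP sX k kc.
by exists (enum_rank_in kX k); rewrite ?enum_rankK_in // suppE mxE enum_rankK_in // -suppE.
Qed.

Lemma wt_restr c : supp c \subset X -> wt (restr X c) = wt c.
Proof. by move=> sX; rewrite /wt -(supp_restr sX) card_imset //; apply: enum_val_inj. Qed.

Lemma sub_code_linear : linear_code C -> linear_code (sub_code C X).
Proof.
move=> linC; split.
  apply/sub_codeP; exists 0; split; rewrite ?linear_code0 //.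
    by apply/subsetP => k; rewrite suppE mxE eqxx.
  by apply/rowP => k; rewrite !mxE.
move=> a _ _ /sub_codeP[c [cC sX ->]] /sub_codeP[c' [c'C sX' ->]].
apply/sub_codeP; exists (a *: c + c'); split; first by case: linC => _; apply.
  apply/subsetP => k; rewrite suppE !mxE; apply: contraR => kX.
  have out_X (x : 'rV[F]_n) : supp x \subset X -> x 0 k = 0.
    by move=> /subsetP/(_ k)/contra/(_ kX); rewrite suppE negbK => /eqP.
  by rewrite out_X // out_X // mulr0 addr0.
by apply/rowP => k; rewrite !mxE.
Qed.

Lemma sub_code_no_wt1 :
  {in C, forall c, wt c != 1%N} -> {in sub_code C X, forall y, wt y != 1%N}.
Proof. by move=> no_wt1 _ /sub_codeP[c [cC sX ->]]; rewrite wt_restr // no_wt1. Qed.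

Lemma sub_code_pair_supported :
  (forall i j, i \in X -> j \in X -> i != j -> exists2 c, c \in C & supp c = [set i; j]) ->
  pair_supported (sub_code C X).
Proof.
move=> pairC j j' jj'.
have ev_jj' : enum_val j != enum_val j' by rewrite (inj_eq enum_val_inj).
have [c cC supp_c] := pairC _ _ (enum_valP j) (enum_valP j') ev_jj'.
have sX : supp c \subset X by rewrite supp_c subUset !sub1set !enum_valP.
exists (restr X c); first by apply/sub_codeP; exists c.
apply: (imset_inj enum_val_inj).
by rewrite supp_restr // supp_c imsetU1 imset_set1.
Qed.

End SubCode.

Section Blocks.
Variables (F : finFieldType) (n n_a : nat) (C : {set 'rV[F]_n}) (P : {set {set 'I_n}}).
Hypotheses (linC : linear_code C) (no_wt1 : {in C, forall c, wt c != 1%N})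
  (nb_at1 : forall v, v \notin C -> nb_at C v 1 = n_a)
  (trivP : trivIset P) (card_block : forall X, X \in P -> #|X| = n_a)
  (wt2_block : forall c, c \in C -> wt c = 2%N -> exists2 X, X \in P & supp c \subset X).

Lemma near_delta_block X i k c : X \in P -> i \in X -> c \in C ->
  supp ('e_i - c) = [set k] -> k \in X.
Proof.
move=> XP iX cC supp_k; have [<- //|ik] := eqVneq i k.
have supp_c := supp_delta_sub ik supp_k.
have [Y YP sY] : exists2 Y, Y \in P & supp c \subset Y.
  by apply: wt2_block; rewrite // /wt supp_c cards2 ik.
have iY : i \in Y by apply: (subsetP sY); rewrite supp_c !inE eqxx.
rewrite -(def_pblock trivP XP iX) (def_pblock trivP YP iY).
by apply: (subsetP sY); rewrite supp_c !inE eqxx orbT.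
Qed.

Lemma near_delta_inj i k c c' : c \in C -> c' \in C ->
  supp ('e_i - c) = [set k] -> supp ('e_i - c') = [set k] -> c = c'.
Proof.
move=> cC c'C supp_c supp_c'; apply/eqP; rewrite -subr_eq0; apply/eqP.
apply: (supp_sub_set1_eq0 no_wt1 (j := k)); first exact: linear_codeB.
have -> : c - c' = ('e_i - c') - ('e_i - c) by rewrite [RHS]addrC opprB addrA subrK.
by apply: subset_trans (supp_subB _ _) _; rewrite supp_c supp_c' setUid.
Qed.

Lemma pair_codeword X i j : X \in P -> i \in X -> j \in X -> i != j ->
  exists2 c, c \in C & supp c = [set i; j].
Proof.
move=> XP iX jX ij; set S := [set c in C | hdist 'e_i c == 1%N].
pose g (c : 'rV[F]_n) := odflt i [pick k in supp ('e_i - c)].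
have supp_g c : c \in S -> supp ('e_i - c) = [set g c].
  rewrite inE => /andP[_ /cards1P[k supp_k]]; rewrite /g supp_k.
  by case: pickP => [k'|/(_ k)]; rewrite in_set1 ?eqxx // => /eqP->.
have SC c : c \in S -> c \in C by rewrite inE => /andP[].
have g_inj : {in S &, injective g}.
  move=> c c' cS c'S gcc'; apply: (near_delta_inj (SC _ cS) (SC _ c'S) (supp_g _ cS)).
  by rewrite gcc'; apply: supp_g.
have gS : [set g c | c in S] = X.
  have card_S : #|S| = n_a by apply: nb_at1; apply: delta_notin no_wt1 i.
  apply/eqP; rewrite eqEcard card_in_imset // card_S card_block // leqnn andbT.
  apply/subsetP => _ /imsetP[c cS ->].
  exact: near_delta_block XP iX (SC c cS) (supp_g c cS).
have /imsetP[c cS jc] : j \in [set g c | c in S] by rewrite gS.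
by exists c; [exact: SC | apply: supp_delta_sub; rewrite // jc supp_g].
Qed.

Lemma card_block_gt1 X : X \in P -> (exists2 c, c \in C & wt c = 2%N) -> (1 < #|X|)%N.
Proof.
move=> XP [c cC wt_c]; have [Y YP sY] := wt2_block cC wt_c.
by rewrite card_block // -(card_block YP) -wt_c subset_leq_card.
Qed.

End Blocks.

Theorem corollary3p7 (F : finFieldType) (n k n_a : nat) (C : {set 'rV[F]_n})
  (P : {set {set 'I_n}}) :
  linear_code C -> code_dim C = k -> min_distance C 2 ->
  covering_radius C = 1%N -> completely_regular C -> (k < n.-1)%N ->
  (forall v, v \notin C -> nb_at C v 1 = n_a) ->
  partition P [set: 'I_n] -> (forall X, X \in P -> #|X| = n_a) ->
  (forall c, c \in C -> wt c = 2%N -> exists2 X, X \in P & supp c \subset X) ->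
  forall X, X \in P ->
    [/\ #|X| = n_a, linear_code (sub_code C X), code_dim (sub_code C X) = n_a.-1,
        min_distance (sub_code C X) 2 &
        covering_radius (sub_code C X) = 1%N] /\
    completely_regular (sub_code C X) /\
        (exists (s : 'S_(#|X|)) (h : 'cV[F]_(#|X|.-1)),
          #|[set i | h i 0 != 0]| = n_a.-1 /\
          generator_matrix (sub_code C X) (Ih_perm s h)).
Proof.
move=> linC _ md _ _ _ nb_at1 partP card_block wt2_block X XP.
have trivP : trivIset P by case/and3P: partP.
have no_wt1 := min_distance2_no_wt1 linC md.
have X_gt1 := card_block_gt1 card_block wt2_block XP (min_distance_exists_wt linC md).
have pairX i j : i \in X -> j \in X -> i != j -> exists2 c, c \in C & supp c = [set i; j].
  exact: (pair_codeword linC no_wt1 nb_at1 trivP card_block wt2_block XP).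
have linX := sub_code_linear X linC.
have [dimX mdX covX crX genX] := pair_supported_code X_gt1 linX
  (sub_code_no_wt1 (X := X) no_wt1) (sub_code_pair_supported pairX).
by rewrite -(card_block X XP).
Qed.
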